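(* For every integer $n\ge0$, \[ \sum_{m=1}^{\infty}\frac{(-1)^{m+1}(2m+2n+3)}{(m+1)(m+2n+2)}H_m=2\ln2\sum_{k=0}^{n}\frac{1}{2k+1}-\sum_{j=1}^{2n+1}\frac1j\sum_{k=1}^{j}\frac{(-1)^{k-1}}{k}. \]
   Context: $H_m=\sum_{j=1}^m 1/j$ is the $m$-th harmonic number. *)

From Stdlib Require Import Reals.
Open Scope R_scope.

Fixpoint H (m : nat) : R :=
  match m with
  | O => 0
  | S k => H k + / INR (S k)
  end.

Fixpoint A (j : nat) : R :=
  match j with
  | O => 0
  | S k => A k + (-1) ^ k / INR (S k)
  end.

Definition term (n m : nat) : R :=
  (-1) ^ (m + 1) * (2 * INR m + 2 * INR n + 3)
  / ((INR m + 1) * (INR m + 2 * INR n + 2)) * H m.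

(* Write r = 2n+1.  Partial fractions turn the m-th summand into
   (-1)^(m+1) (H_m - H_(m-r))/(m+1) plus a difference t(m+r) - t(m) with
   t(k) = (-1)^k H_(k-r)/(k+1); the differences telescope to r boundary
   terms, each tending to 0 because H_k/(k+1) -> 0 (Cesaro).  Expanding the
   window H_m - H_(m-r) = sum_(s=1)^r 1/(m+1-s) and interchanging the finite
   and the outer sums gives, for each s, an alternating sum of
   1/((m+1)(m+1-s)) whose partial sums have a closed form in terms of A;
   since A_j -> ln 2 (alternating series bound via the Taylor remainder of
   ln(1+x)), each of them converges, and the r limits add up to
   ln 2 (H_r + A_r) - sum_(j=1)^r A_j/j.  Finally H_r + A_r = 2 sum 1/(2k+1). *)
From Stdlib Require Import Reals Lra Lia Arith FunctionalExtensionality.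
Open Scope R_scope.

(* [psum f N] is the sum of the first [N] values [f 0 + ... + f (N-1)];
   unlike [sum_f_R0] it allows the empty sum, which keeps inductions clean. *)
Fixpoint psum (f : nat -> R) (N : nat) : R :=
  match N with
  | O => 0
  | S k => psum f k + f k
  end.

Lemma psum_ext (f g : nat -> R) (N : nat) :
  (forall i, (i < N)%nat -> f i = g i) -> psum f N = psum g N.
Proof.
  induction N as [|N IH]; intro Hfg; simpl; [reflexivity|].
  rewrite IH, Hfg; auto with arith.
Qed.

Lemma psum_eq0 (f : nat -> R) (N : nat) :
  (forall i, (i < N)%nat -> f i = 0) -> psum f N = 0.
Proof.
  intro Hf. rewrite (psum_ext f (fun _ => 0)) by exact Hf. clear Hf.
  induction N as [|N IH]; simpl; lra.
Qed.

Lemma psum_plus (f g : nat -> R) (N : nat) :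
  psum (fun i => f i + g i) N = psum f N + psum g N.
Proof. induction N as [|N IH]; simpl; [ring|rewrite IH; ring]. Qed.

Lemma psum_scal (c : R) (f : nat -> R) (N : nat) :
  psum (fun i => c * f i) N = c * psum f N.
Proof. induction N as [|N IH]; simpl; [ring|rewrite IH; ring]. Qed.

Lemma psum_telescope (h : nat -> R) (N : nat) :
  psum (fun i => h (S i) - h i) N = h N - h O.
Proof. induction N as [|N IH]; simpl; [ring|rewrite IH; ring]. Qed.

Lemma psum_shift_telescope (f : nat -> R) (r N : nat) :
  psum (fun i => f (i + r)%nat - f i) N = psum (fun j => f (N + j)%nat - f j) r.
Proof.
  induction N as [|N IH].
  - symmetry. apply psum_eq0. intros j _. simpl. ring.
  - simpl psum at 1. rewrite IH.
    assert (Hstep : psum (fun j => f (S N + j)%nat - f j) r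
                    = psum (fun j => f (N + j)%nat - f j) r
                      + psum (fun j => f (N + S j)%nat - f (N + j)%nat) r).
    { rewrite <- psum_plus. apply psum_ext. intros j _.
      rewrite <- plus_n_Sm. simpl. ring. }
    rewrite Hstep, (psum_telescope (fun j => f (N + j)%nat)), Nat.add_0_r. ring.
Qed.

Lemma sum_f_R0_psum (f : nat -> R) (N : nat) : sum_f_R0 f N = psum f (S N).
Proof. induction N as [|N IH]; simpl in *; [ring|rewrite IH; reflexivity]. Qed.

Lemma sum_f_1_psum (f : nat -> R) (N : nat) :
  sum_f 1 (S N) f = psum (fun j => f (S j)) (S N).
Proof.
  unfold sum_f. rewrite Nat.sub_succ, Nat.sub_0_r, sum_f_R0_psum.
  apply psum_ext. intros j _. now rewrite Nat.add_1_r.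
Qed.

Lemma Un_cv_const (c : R) : Un_cv (fun _ => c) c.
Proof.
  intros eps Heps. exists O. intros. unfold Rdist. rewrite Rminus_diag, Rabs_R0. exact Heps.
Qed.

Lemma Un_cv_reindex (u : nat -> R) (l : R) (phi : nat -> nat) (c : nat) :
  Un_cv u l -> (forall N, (N <= phi N + c)%nat) -> Un_cv (fun N => u (phi N)) l.
Proof.
  intros Hu Hphi eps Heps. destruct (Hu eps Heps) as [N0 HN0]. exists (N0 + c)%nat.
  intros N HN. apply HN0. specialize (Hphi N). lia.
Qed.

Lemma Un_cv_squeeze (u v : nat -> R) (l : R) :
  (forall N, Rabs (u N - l) <= v N) -> Un_cv v 0 -> Un_cv u l.
Proof.
  intros Huv Hv eps Heps. destruct (Hv eps Heps) as [N0 HN0]. exists N0.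
  intros N HN. specialize (HN0 N HN). unfold Rdist in *.
  rewrite Rminus_0_r in HN0. eapply Rle_lt_trans; [apply Huv|].
  eapply Rle_lt_trans; [apply Rle_abs|exact HN0].
Qed.

Lemma Un_cv_psum (f : nat -> nat -> R) (l : nat -> R) (M : nat) :
  (forall i, Un_cv (fun N => f N i) (l i)) ->
  Un_cv (fun N => psum (f N) M) (psum l M).
Proof.
  intro Hf. induction M as [|M IH]; simpl.
  - apply Un_cv_const.
  - exact (CV_plus _ _ _ _ IH (Hf M)).
Qed.

Lemma inv_succ_cv : Un_cv (fun N => / INR (S N)) 0.
Proof.
  apply (cv_infty_cv_0 (fun N => INR (S N))).
  intro M. destruct (INR_unbounded M) as [N HN]. exists N. intros k Hk.
  apply le_INR in Hk. rewrite S_INR. lra.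
Qed.

Lemma derivable_pt_lim_eq (f g : R -> R) (x l l' : R) :
  (forall y, f y = g y) -> l = l' -> derivable_pt_lim f x l -> derivable_pt_lim g x l'.
Proof.
  intros Hfg <- Hf. replace g with f by (apply functional_extensionality; exact Hfg).
  exact Hf.
Qed.

Lemma derivable_pt_lim_psum (f : nat -> R -> R) (f' : nat -> R) (x : R) (N : nat) :
  (forall k, derivable_pt_lim (f k) x (f' k)) ->
  derivable_pt_lim (fun y => psum (fun k => f k y) N) x (psum f' N).
Proof.
  intro Hf. induction N as [|N IH]; simpl.
  - apply derivable_pt_lim_const.
  - exact (derivable_pt_lim_plus _ _ x _ _ IH (Hf N)).
Qed.

Lemma nonneg_deriv_le (f f' : R -> R) (a b : R) :
  a <= b ->
  (forall c, a <= c <= b -> derivable_pt_lim f c (f' c)) ->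
  (forall c, a < c < b -> 0 <= f' c) -> f a <= f b.
Proof.
  intros Hab Hder Hpos. destruct Hab as [Hlt|<-]; [|lra].
  destruct (MVT_cor2 f f' a b Hlt Hder) as [c [Hc Hcab]].
  assert (0 <= f' c * (b - a)) by (apply Rmult_le_pos; [apply Hpos|]; lra).
  lra.
Qed.

Lemma pow_m1_S (j : nat) : (-1) ^ S j = - (-1) ^ j.
Proof. simpl. ring. Qed.

Lemma pow_m1_even_shift (j k : nat) : (-1) ^ (j + 2 * k) = (-1) ^ j.
Proof. rewrite pow_add, pow_1_even. ring. Qed.

Lemma pow_m1_sqr (j : nat) : (-1) ^ j * (-1) ^ j = 1.
Proof. rewrite <- Rpow_mult_distr. replace (-1 * -1) with 1 by ring. apply pow1. Qed.

Lemma A_psum (M : nat) : A M = psum (fun k => (-1) ^ k / INR (S k)) M.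
Proof. induction M as [|M IH]; simpl; [reflexivity|rewrite IH; reflexivity]. Qed.

Lemma H_psum (M : nat) : H M = psum (fun k => / INR (S k)) M.
Proof. induction M as [|M IH]; simpl; [reflexivity|rewrite IH; reflexivity]. Qed.

(* The Taylor polynomial of [ln (1 + x)] of degree [M]; at [x = 1] it is [A M]. *)
Definition log1p_taylor (M : nat) (x : R) : R :=
  psum (fun k => (-1) ^ k * x ^ S k / INR (S k)) M.

(* The derivative of the Taylor polynomial is a finite geometric sum. *)
Lemma log1p_taylor_geom (M : nat) (x : R) :
  psum (fun k => (-1) ^ k * x ^ k) M * (1 + x) = 1 - (-1) ^ M * x ^ M.
Proof. induction M as [|M IH]; simpl; [ring|]. rewrite Rmult_plus_distr_r, IH. ring. Qed.

Lemma log1p_taylor_deriv (M : nat) (x : R) :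
  derivable_pt_lim (log1p_taylor M) x (psum (fun k => (-1) ^ k * x ^ k) M).
Proof.
  apply (derivable_pt_lim_psum (fun k y => (-1) ^ k * y ^ S k / INR (S k))).
  intro k.
  apply (derivable_pt_lim_eq (mult_real_fct ((-1) ^ k / INR (S k)) (fun y => y ^ S k))
           _ x (((-1) ^ k / INR (S k)) * (INR (S k) * x ^ pred (S k)))).
  - intro y. unfold mult_real_fct, Rdiv. ring.
  - simpl pred. field. apply not_0_INR. discriminate.
  - apply derivable_pt_lim_scal, derivable_pt_lim_pow.
Qed.

Lemma ln_1_plus_deriv (y : R) :
  -1 < y -> derivable_pt_lim (fun t => ln (1 + t)) y (/ (1 + y)).
Proof.
  intro Hy.
  apply (derivable_pt_lim_eq (comp ln (fun t => 1 + t)) _ y (/ (1 + y) * 1));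
    [reflexivity|ring|].
  apply derivable_pt_lim_comp.
  - apply (derivable_pt_lim_eq (plus_fct (fct_cte 1) id) _ y (0 + 1));
      [reflexivity|ring|].
    apply derivable_pt_lim_plus; [apply derivable_pt_lim_const|apply derivable_pt_lim_id].
  - apply derivable_pt_lim_ln. lra.
Qed.

(* The signed Taylor remainder of [ln (1 + y)]; its derivative [y^M / (1 + y)]
   is squeezed between [0] and [y^M] on [0, 1]. *)
Definition log1p_remainder (M : nat) (y : R) : R :=
  (-1) ^ M * (ln (1 + y) - log1p_taylor M y).

Lemma log1p_remainder_deriv (M : nat) (y : R) :
  0 <= y -> derivable_pt_lim (log1p_remainder M) y (y ^ M / (1 + y)).
Proof.
  intro Hy.
  apply (derivable_pt_lim_eq
           (mult_real_fct ((-1) ^ M) (minus_fct (fun t => ln (1 + t)) (log1p_taylor M)))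
           _ y ((-1) ^ M * (/ (1 + y) - psum (fun k => (-1) ^ k * y ^ k) M)));
    [reflexivity| |].
  - assert (Hgeom : psum (fun k => (-1) ^ k * y ^ k) M = (1 - (-1) ^ M * y ^ M) / (1 + y))
      by (rewrite <- log1p_taylor_geom; field; lra).
    rewrite Hgeom. unfold Rdiv.
    replace ((-1) ^ M * (/ (1 + y) - (1 - (-1) ^ M * y ^ M) * / (1 + y)))
      with ((-1) ^ M * (-1) ^ M * y ^ M * / (1 + y)) by ring.
    rewrite pow_m1_sqr. ring.
  - apply derivable_pt_lim_scal, derivable_pt_lim_minus;
      [apply ln_1_plus_deriv; lra|apply log1p_taylor_deriv].
Qed.

Lemma log1p_remainder_at_0 (M : nat) : log1p_remainder M 0 = 0.
Proof.
  unfold log1p_remainder, log1p_taylor.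
  rewrite Rplus_0_r, ln_1, psum_eq0; [ring|]. intros k _. simpl. unfold Rdiv. ring.
Qed.

Lemma log1p_remainder_at_1 (M : nat) : log1p_remainder M 1 = (-1) ^ M * (ln 2 - A M).
Proof.
  unfold log1p_remainder, log1p_taylor. rewrite A_psum.
  replace (1 + 1) with 2 by ring. do 2 f_equal.
  apply psum_ext. intros k _. rewrite pow1. unfold Rdiv. ring.
Qed.

(* Lower bound: the remainder grows on [0, 1] from its value [0] at [0]. *)
Lemma log1p_remainder_nonneg (M : nat) : 0 <= log1p_remainder M 1.
Proof.
  rewrite <- (log1p_remainder_at_0 M).
  apply (nonneg_deriv_le _ (fun y => y ^ M / (1 + y))); [lra| |].
  - intros c Hc. apply log1p_remainder_deriv. lra.
  - intros c Hc. apply Rmult_le_pos; [apply pow_le; lra|].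
    left. apply Rinv_0_lt_compat. lra.
Qed.

(* Upper bound: the remainder grows more slowly than [y^(M+1) / (M+1)]. *)
Lemma log1p_remainder_le (M : nat) : log1p_remainder M 1 <= / INR (S M).
Proof.
  assert (HSM : 0 < INR (S M)) by (apply lt_0_INR; lia).
  set (gap := fun y => y ^ S M / INR (S M) - log1p_remainder M y).
  assert (Hgap : gap 0 <= gap 1).
  { apply (nonneg_deriv_le _ (fun y => y ^ M - y ^ M / (1 + y))); [lra| |].
    - intros c Hc.
      apply (derivable_pt_lim_eq
               (minus_fct (mult_real_fct (/ INR (S M)) (fun y => y ^ S M))
                  (log1p_remainder M))
               _ c (/ INR (S M) * (INR (S M) * c ^ pred (S M)) - c ^ M / (1 + c))).
      + intro y. unfold gap, minus_fct, mult_real_fct, Rdiv. ring.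
      + simpl pred. field. lra.
      + apply derivable_pt_lim_minus;
          [apply derivable_pt_lim_scal, derivable_pt_lim_pow|].
        apply log1p_remainder_deriv. lra.
    - intros c Hc.
      assert (Hpow : 0 <= c ^ M) by (apply pow_le; lra).
      assert (c ^ M / (1 + c) <= c ^ M).
      { unfold Rdiv. rewrite <- (Rmult_1_r (c ^ M)) at 2.
        apply Rmult_le_compat_l; [exact Hpow|].
        rewrite <- Rinv_1. apply Rinv_le_contravar; lra. }
      lra. }
  unfold gap in Hgap. rewrite log1p_remainder_at_0, pow1, pow_i in Hgap by lia.
  unfold Rdiv in Hgap. lra.
Qed.

Lemma alt_harmonic_error (M : nat) : Rabs (ln 2 - A M) <= / INR (S M).
Proof.
  pose proof (log1p_remainder_nonneg M) as Hlow.
  pose proof (log1p_remainder_le M) as Hhigh.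
  rewrite log1p_remainder_at_1 in Hlow, Hhigh.
  replace (ln 2 - A M) with ((-1) ^ M * ((-1) ^ M * (ln 2 - A M)))
    by (rewrite <- Rmult_assoc, pow_m1_sqr; ring).
  rewrite Rabs_mult, pow_1_abs, Rmult_1_l. apply Rabs_le. lra.
Qed.

Lemma alt_harmonic_cv : Un_cv A (ln 2).
Proof.
  apply (Un_cv_squeeze _ (fun M => / INR (S M))); [|exact inv_succ_cv].
  intro M. rewrite Rabs_minus_sym. apply alt_harmonic_error.
Qed.

Lemma H_mono (a b : nat) : (a <= b)%nat -> H a <= H b.
Proof.
  induction 1 as [|b _ IH]; [lra|]. cbn [H].
  pose proof (Rinv_0_lt_compat (INR (S b)) (lt_0_INR _ (Nat.lt_0_succ b))). lra.
Qed.

Lemma H_nonneg (k : nat) : 0 <= H k.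
Proof. apply (H_mono O). lia. Qed.

(* [H_k / (k + 1) -> 0]: the Cesaro means of [1 / (i + 1)] tend to [0]. *)
Lemma harmonic_over_succ_cv : Un_cv (fun k => H k / INR (S k)) 0.
Proof.
  apply (Un_cv_squeeze _ (fun k => sum_f_R0 (fun i => / INR (S i)) (pred k) / INR k));
    [|exact (Cesaro_1 _ _ inv_succ_cv)].
  intros [|k].
  - cbn [H pred sum_f_R0 INR]. unfold Rdiv.
    rewrite Rinv_0, Rmult_0_l, Rmult_0_r, Rminus_0_r, Rabs_R0. lra.
  - simpl pred. rewrite sum_f_R0_psum, <- H_psum, Rminus_0_r.
    pose proof (H_nonneg (S k)) as HH.
    assert (HSk : 0 < INR (S k)) by (apply lt_0_INR; lia).
    assert (HSSk : INR (S k) <= INR (S (S k))) by (apply le_INR; lia).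
    rewrite Rabs_pos_eq by (apply Rmult_le_pos; [lra|left; apply Rinv_0_lt_compat; lra]).
    apply Rmult_le_compat_l; [lra|]. apply Rinv_le_contravar; lra.
Qed.

(* Boundary term of the telescoping part of the summand. *)
Definition tail (r k : nat) : R := (-1) ^ k * H (k - r) / INR (S k).

Lemma tail_cv (r : nat) : Un_cv (tail r) 0.
Proof.
  apply (Un_cv_squeeze _ (fun k => H k / INR (S k))); [|exact harmonic_over_succ_cv].
  intro k. unfold tail, Rdiv. rewrite Rminus_0_r, !Rabs_mult, pow_1_abs, Rmult_1_l.
  rewrite Rabs_pos_eq by apply H_nonneg.
  rewrite (Rabs_pos_eq (/ _)) by (left; apply Rinv_0_lt_compat, lt_0_INR; lia).
  apply Rmult_le_compat_r; [left; apply Rinv_0_lt_compat, lt_0_INR; lia|].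
  apply H_mono. lia.
Qed.

(* The non-telescoping part: [H_m - H_(m-r)] is the harmonic sum over the
   window [(m - r, m]]. *)
Definition window (r i : nat) : R :=
  (-1) ^ i * (H (S i) - H (S i - r)) / INR (S (S i)).

(* Partial fractions: [(2m+r+2)/((m+1)(m+r+1)) = 1/(m+1) + 1/(m+r+1)] with
   [r = 2n+1] odd splits the summand into a window term and a telescoping pair. *)
Lemma term_split (n i : nat) :
  term n (S i) = window (2 * n + 1) i
                 + (tail (2 * n + 1) (S (i + (2 * n + 1))) - tail (2 * n + 1) (S i)).
Proof.
  unfold term, window, tail.
  replace (S (i + (2 * n + 1)) - (2 * n + 1))%nat with (S i) by lia.
  replace (S i + 1)%nat with (i + 2 * 1)%nat by lia.
  replace (S (i + (2 * n + 1)))%nat with (i + 2 * (n + 1))%nat by lia.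
  rewrite !pow_m1_even_shift, pow_m1_S.
  rewrite !S_INR, !plus_INR, !mult_INR, !S_INR. simpl (INR 2).
  rewrite ?plus_INR, ?S_INR, ?INR_0, ?INR_1.
  pose proof (pos_INR i). pose proof (pos_INR n).
  field. lra.
Qed.

(* Since [H_(k - r)] vanishes for [k <= r], only the upper boundary terms
   of the telescoping pairs survive. *)
Lemma tail_partial_sum (r N : nat) :
  psum (fun i => tail r (S (i + r)) - tail r (S i)) N = psum (fun j => tail r (S (N + j))) r.
Proof.
  rewrite (psum_shift_telescope (fun k => tail r (S k))).
  apply psum_ext. intros j Hj.
  replace (tail r (S j)) with 0; [ring|].
  unfold tail. replace (S j - r)%nat with O by lia. simpl H. unfold Rdiv. ring.
Qed.

(* Closed form of [sum_(m = s)^N (-1)^(m+1) / ((m+1)(m+1-s))], obtained from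
   [1/((m+1)(m+1-s)) = (1/s)(1/(m+1-s) - 1/(m+1))].  When [s <= N + 1] the
   index [S N - s + s] is [S N]; otherwise the sum is empty and the expression
   vanishes. *)
Definition inner_partial (N s : nat) : R :=
  (- (-1) ^ s * A (S N - s) + A (S N - s + s) - A s) / INR s.

(* Its limit as [N -> oo], using [A_j -> ln 2]. *)
Definition inner_limit (s : nat) : R := (ln 2 - (-1) ^ s * ln 2 - A s) / INR s.

(* With [N = 0] every inner sum is empty. *)
Lemma inner_partial_0 (s : nat) : inner_partial O (S s) = 0.
Proof.
  unfold inner_partial. replace (1 - S s)%nat with O by lia. simpl (O + S s)%nat.
  simpl A at 1. unfold Rdiv. ring.
Qed.

Lemma inner_partial_step (N s : nat) :
  inner_partial (S N) (S s) - inner_partial N (S s)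
  = (-1) ^ N * (H (S N - s) - H (S N - S s)) / INR (S (S N)).
Proof.
  unfold inner_partial. destruct (le_lt_dec s N) as [Hle|Hlt].
  - destruct (Nat.le_exists_sub s N Hle) as [k [-> _]].
    replace (S (S (k + s)) - S s)%nat with (S k) by lia.
    replace (S (k + s) - S s)%nat with k by lia.
    replace (S (k + s) - s)%nat with (S k) by lia.
    replace (S k + S s)%nat with (S (k + S s)) by lia.
    cbn [A H]. rewrite !pow_add, pow_m1_S, !S_INR, !plus_INR, !S_INR.
    pose proof (pos_INR k). pose proof (pos_INR s).
    field. lra.
  - replace (S (S N) - S s)%nat with O by lia.
    replace (S N - S s)%nat with O by lia.
    replace (S N - s)%nat with O by lia.
    simpl (O + S s)%nat. cbn [A H]. unfold Rdiv. ring.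
Qed.

(* Interchanging the order of summation: the partial sums of the window terms
   are the sums over [s = 1 .. r] of the inner partial sums. *)
Lemma window_partial_sum (r N : nat) :
  psum (window r) N = psum (fun s => inner_partial N (S s)) r.
Proof.
  induction N as [|N IH].
  - symmetry. apply psum_eq0. intros s _. apply inner_partial_0.
  - simpl psum at 1. rewrite IH.
    set (h := fun s => - H (S N - s)).
    rewrite (psum_ext (fun s => inner_partial (S N) (S s))
               (fun s => inner_partial N (S s)
                         + (-1) ^ N / INR (S (S N)) * (h (S s) - h s))).
    + rewrite psum_plus, psum_scal, psum_telescope.
      unfold window, h. rewrite Nat.sub_0_r. unfold Rdiv. ring.
    + intros s _. cbv beta.
      replace (inner_partial (S N) (S s))
        with (inner_partial N (S s) + (inner_partial (S N) (S s) - inner_partial N (S s)))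
        by ring.
      rewrite inner_partial_step. unfold h, Rdiv. ring.
Qed.

Lemma inner_partial_cv (s : nat) : Un_cv (fun N => inner_partial N s) (inner_limit s).
Proof.
  unfold inner_partial, inner_limit, Rdiv.
  apply (CV_mult _ (fun _ => / INR s)); [|apply Un_cv_const].
  replace (ln 2 - (-1) ^ s * ln 2 - A s) with (- (-1) ^ s * ln 2 + ln 2 - A s) by ring.
  apply (CV_minus _ (fun _ => A s)); [|apply Un_cv_const].
  apply CV_plus.
  - apply (CV_mult (fun _ => - (-1) ^ s)); [apply Un_cv_const|].
    apply (Un_cv_reindex A _ (fun N => S N - s)%nat s alt_harmonic_cv). intro; lia.
  - apply (Un_cv_reindex A _ (fun N => S N - s + s)%nat O alt_harmonic_cv). intro; lia.
Qed.

Lemma inner_limit_sum (m : nat) :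
  psum (fun s => inner_limit (S s)) m
  = ln 2 * (H m + A m) - psum (fun s => / INR (S s) * A (S s)) m.
Proof.
  induction m as [|m IH]; cbn [psum].
  - simpl. ring.
  - rewrite IH. unfold inner_limit.
    change (H (S m)) with (H m + / INR (S m)).
    change (A (S m)) with (A m + (-1) ^ m / INR (S m)).
    rewrite pow_m1_S.
    assert (0 < INR (S m)) by (apply lt_0_INR; lia).
    field. lra.
Qed.

(* [H_r + A_r] keeps exactly twice the odd reciprocals [1/(2k+1)], [2k+1 <= r]. *)
Lemma H_plus_A_odd (n : nat) :
  H (2 * n + 1) + A (2 * n + 1) = 2 * sum_f_R0 (fun k => / (2 * INR k + 1)) n.
Proof.
  induction n as [|n IH].
  - simpl. field.
  - replace (2 * S n + 1)%nat with (S (S (2 * n + 1))) by lia.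
    set (r := (2 * n + 1)%nat).
    change (H (S (S r))) with (H r + / INR (S r) + / INR (S (S r))).
    change (A (S (S r))) with (A r + (-1) ^ r / INR (S r) + (-1) ^ S r / INR (S (S r))).
    cbn [sum_f_R0]. rewrite Rmult_plus_distr_l, <- IH.
    assert (Hodd : (-1) ^ r = -1) by (unfold r; rewrite Nat.add_1_r; apply pow_1_odd).
    rewrite pow_m1_S, Hodd.
    unfold r. rewrite !S_INR, plus_INR, mult_INR. simpl (INR 2). rewrite INR_1.
    pose proof (pos_INR n). field. lra.
Qed.

(* The [N]-th partial sum splits into [r] inner partial sums and [r]
   boundary terms, both with a number of terms independent of [N]. *)
Lemma partial_sum_decomposition (n N : nat) :
  psum (fun i => term n (S i)) N
  = psum (fun s => inner_partial N (S s)) (2 * n + 1)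
    + psum (fun j => tail (2 * n + 1) (S (N + j))) (2 * n + 1).
Proof.
  rewrite (psum_ext _ _ N (fun i _ => term_split n i)).
  now rewrite psum_plus, window_partial_sum, tail_partial_sum.
Qed.

Lemma partial_sums_cv (n : nat) :
  Un_cv (fun N => psum (fun i => term n (S i)) N)
    (ln 2 * (H (2 * n + 1) + A (2 * n + 1))
     - psum (fun s => / INR (S s) * A (S s)) (2 * n + 1)).
Proof.
  rewrite <- inner_limit_sum, <- (Rplus_0_r (psum _ _)).
  rewrite <- (psum_eq0 (fun _ => 0) (2 * n + 1)) by reflexivity.
  replace (fun N => psum (fun i => term n (S i)) N)
    with (fun N => psum (fun s => inner_partial N (S s)) (2 * n + 1)
                   + psum (fun j => tail (2 * n + 1) (S (N + j))) (2 * n + 1))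
    by (apply functional_extensionality; intro N; symmetry;
        apply partial_sum_decomposition).
  apply CV_plus; apply Un_cv_psum; intro j.
  - apply inner_partial_cv.
  - apply (Un_cv_reindex (tail (2 * n + 1)) _ (fun N => S (N + j)) O (tail_cv _)).
    intro; lia.
Qed.

Theorem proposition7 (n : nat) :
  infinite_sum (fun i : nat => term n (S i))
    (2 * ln 2 * sum_f_R0 (fun k : nat => / (2 * INR k + 1)) n
     - sum_f 1 (2 * n + 1) (fun j : nat => / INR j * A j)).
Proof.
  rewrite Nat.add_1_r, sum_f_1_psum, <- Nat.add_1_r.
  replace (2 * ln 2 * sum_f_R0 (fun k => / (2 * INR k + 1)) n)
    with (ln 2 * (H (2 * n + 1) + A (2 * n + 1))) by (rewrite H_plus_A_odd; ring).
  (* [infinite_sum] is convergence of the [sum_f_R0] partial sums, which are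
     the [psum] partial sums shifted by one. *)
  change (Un_cv (fun N => sum_f_R0 (fun i => term n (S i)) N)
            (ln 2 * (H (2 * n + 1) + A (2 * n + 1))
             - psum (fun j => / INR (S j) * A (S j)) (2 * n + 1))).
  replace (fun N => sum_f_R0 (fun i => term n (S i)) N)
    with (fun N => psum (fun i => term n (S i)) (S N))
    by (apply functional_extensionality; intro N; symmetry; apply sum_f_R0_psum).
  exact (Un_cv_reindex _ _ S O (partial_sums_cv n) ltac:(intro; lia)).
Qed.
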